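(* The set function $A\mapsto\bar\Lambda(A,P)$ on $2^E$ is monotone (i.e. $\bar\Lambda(A,P)\le\bar\Lambda(B,P)$ for $A\subseteq B\subseteq E$) and submodular (i.e. $\bar\Lambda(A\cup\{e\},P)-\bar\Lambda(A,P)\ge\bar\Lambda(B\cup\{e\},P)-\bar\Lambda(B,P)$ for all $A\subseteq B\subseteq E$, $e\in E$).
   Context: $G=(V,E)$ is a simple directed acyclic graph with capacities $C\in\mathbb{R}_{\ge0}^E$ and $\gamma$ is a budget with $0<\gamma\le\min_eC(e)$. User paths $P=\{p_1,\dots,p_k\}$ are directed paths (edge sets, not necessarily disjoint) with initial values $\lambda_i\ge0$, $\sum_{i:e\in p_i}\lambda_i\le C(e)$ for all $e$. Let $E_1$ be the set of edges lying on exactly one user path and $E_2$ the set of edges lying on at least two user paths. For $A\subseteq E$ let $\tilde C_A(e)=C(e)-\gamma\mathbf{1}_{\{e\in A\}}$. Define $\tilde\lambda^{(1)}_{iA}=\min\big(\lambda_i,\min_{e\in p_i\cap E_1}\tilde C_A(e)\big)$ and $\tilde\lambda^{(2)}_{iA}=\tilde\lambda^{(1)}_{iA}\cdot\prod_{e\in p_i\cap E_2,\ \tilde C_A(e)\le\sum_{j:e\in p_j}\lambda_j}\frac{\tilde C_A(e)}{\sum_{j:e\in p_j}\lambda_j}$, and $\bar\Lambda(A,P)=\sum_i\lambda_i-\sum_i\tilde\lambda^{(2)}_{iA}$. *)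

From HB Require Import structures.
From mathcomp Require Import all_boot all_order all_algebra.
Set Implicit Arguments. Unset Strict Implicit. Unset Printing Implicit Defensive.
Import Order.TTheory GRing.Theory Num.Theory.
Local Open Scope ring_scope.

Section Defs.
Variable V : finType.

Definition erel (E : {set V * V}) : rel V := fun u v => (u, v) \in E.

(* Simple: no self-loops (parallel edges are impossible since E is a set). *)
Definition simple_digraph (E : {set V * V}) : Prop :=
  forall v : V, (v, v) \notin E.

Definition acyclic (E : {set V * V}) : Prop :=
  forall c : seq V, c != [::] -> ~~ cycle (erel E) c.

Definition path_edges (x : V) (s : seq V) : {set V * V} :=
  [set e in zip (x :: s) s].

Definition is_dpath (E : {set V * V}) (P : {set V * V}) : Prop :=
  exists (x : V) (s : seq V),
    [/\ path (erel E) x s, uniq (x :: s) & P = path_edges x s].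

Variable R : realFieldType.
Variables (k : nat) (P : 'I_k -> {set V * V}) (E : {set V * V}).
Variables (C : V * V -> R) (gamma : R) (lam : 'I_k -> R).

Definition npaths (e : V * V) : nat := #|[set i | e \in P i]|.
Definition E1 : {set V * V} := [set e in E | npaths e == 1%N].
Definition E2 : {set V * V} := [set e in E | (2 <= npaths e)%N].

Definition load (e : V * V) : R := \sum_(i | e \in P i) lam i.

Definition Ctil (A : {set V * V}) (e : V * V) : R :=
  C e - gamma * (e \in A)%:R.

Definition lam1 (i : 'I_k) (A : {set V * V}) : R :=
  \big[Order.min/lam i]_(e in P i :&: E1) Ctil A e.

Definition lam2 (i : 'I_k) (A : {set V * V}) : R :=
  lam1 i A * \prod_(e in P i :&: E2 | Ctil A e <= load e) (Ctil A e / load e).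

Definition LambdaBar (A : {set V * V}) : R :=
  \sum_i lam i - \sum_i lam2 i A.

End Defs.

From HB Require Import structures.
From mathcomp Require Import all_boot all_order all_algebra.
From mathcomp Require Import lra.
Import Order.TTheory GRing.Theory Num.Theory.
Set Implicit Arguments. Unset Strict Implicit. Unset Printing Implicit Defensive.
Local Open Scope ring_scope.

(* Each reduced value [lam2 i A] is a product of nonnegative, nonincreasing,
   supermodular set functions of the set A of reduced edges: the capped minimum
   [lam1 i A] of the reduced capacities on the private edges of path i, and
   one factor per shared edge e that only depends on whether e is in A.  For
   the minimum, adding an edge e0 turns [min (C e0) m] into
   [min (C e0 - gamma) m], whose loss grows with m, and m shrinks as A grows.
   Nonnegative nonincreasing supermodular functions are closed under products
   (product rule for marginals) and sums, and [LambdaBar] is a constant minus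
   a sum of them, hence monotone and submodular. *)

Section SetFunctions.
Variables (R : realFieldType) (T : finType).
Implicit Types (F G : {set T} -> R) (A B X : {set T}).

Definition supermodular F :=
  forall A B e, A \subset B -> F (e |: A) - F A <= F (e |: B) - F B.

Definition nonneg_antitone_supermodular F :=
  [/\ forall A, 0 <= F A,
      forall A B, A \subset B -> F B <= F A
    & supermodular F].

Lemma eq_nonneg_antitone_supermodular F G :
  nonneg_antitone_supermodular F -> F =1 G -> nonneg_antitone_supermodular G.
Proof.
move=> [F0 Fanti Fsuper] FG; split=> [A|A B|A B e]; rewrite -!FG.
- exact: F0.
- exact: Fanti.
- exact: Fsuper.
Qed.

Lemma supermodular_notin F :
  (forall A B, A \subset B -> F B <= F A) ->
  (forall A B e, A \subset B -> e \notin B ->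
     F (e |: A) - F A <= F (e |: B) - F B) ->
  supermodular F.
Proof.
move=> Fanti Fsuper A B e AB; have [eB|] := boolP (e \in B); last exact: Fsuper.
have -> : e |: B = B by apply/setUidPr; rewrite sub1set.
by rewrite subrr subr_le0 Fanti ?subsetUr.
Qed.

Lemma nonneg_antitone_supermodular_cst (c : R) :
  0 <= c -> nonneg_antitone_supermodular (fun=> c).
Proof. by move=> c0; split=> // *; rewrite subrr. Qed.

Lemma nonneg_antitone_supermodularD F G :
  nonneg_antitone_supermodular F -> nonneg_antitone_supermodular G ->
  nonneg_antitone_supermodular (fun A => F A + G A).
Proof.
move=> [F0 Fanti Fsuper] [G0 Ganti Gsuper]; split=> [A|A B AB|A B e AB].
- exact: addr_ge0.
- exact: lerD (Fanti _ _ AB) (Ganti _ _ AB).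
- by have := Fsuper _ _ e AB; have := Gsuper _ _ e AB; lra.
Qed.

Lemma nonneg_antitone_supermodularM F G :
  nonneg_antitone_supermodular F -> nonneg_antitone_supermodular G ->
  nonneg_antitone_supermodular (fun A => F A * G A).
Proof.
move=> [F0 Fanti Fsuper] [G0 Ganti Gsuper]; split=> [A|A B AB|A B e AB].
- exact: mulr_ge0.
- exact: ler_pM (Fanti _ _ AB) (Ganti _ _ AB).
have marginalM X : F (e |: X) * G (e |: X) - F X * G X =
    F (e |: X) * (G (e |: X) - G X) + G X * (F (e |: X) - F X).
  by rewrite mulrBr mulrBr addrA [G X * _]mulrC subrK [G X * _]mulrC.
have dGA_le0 : G (e |: A) - G A <= 0 by rewrite subr_le0 Ganti ?subsetUr.
have dFA_le0 : F (e |: A) - F A <= 0 by rewrite subr_le0 Fanti ?subsetUr.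
have FBA : F (e |: B) <= F (e |: A) by rewrite Fanti ?setUS.
rewrite !marginalM; apply: lerD.
- apply: le_trans (ler_wpM2l (F0 _) (Gsuper _ _ e AB)).
  by rewrite ler_wnM2r.
- apply: le_trans (ler_wpM2l (G0 _) (Fsuper _ _ e AB)).
  by rewrite ler_wnM2r // Ganti.
Qed.

Lemma nonneg_antitone_supermodular_sum (I : Type) (r : seq I) (p : pred I)
    (F : I -> {set T} -> R) :
  (forall i, p i -> nonneg_antitone_supermodular (F i)) ->
  nonneg_antitone_supermodular (fun A => \sum_(i <- r | p i) F i A).
Proof.
move=> FP; elim: r => [|j r IHr].
  apply: (eq_nonneg_antitone_supermodular
    (nonneg_antitone_supermodular_cst (lexx (0 : R)))).
  by move=> A; rewrite big_nil.
case pj: (p j).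
- apply: (eq_nonneg_antitone_supermodular
    (nonneg_antitone_supermodularD (FP j pj) IHr)).
  by move=> A; rewrite big_cons pj.
- apply: (eq_nonneg_antitone_supermodular IHr).
  by move=> A; rewrite big_cons pj.
Qed.

Lemma nonneg_antitone_supermodular_prod (I : Type) (r : seq I) (p : pred I)
    (F : I -> {set T} -> R) :
  (forall i, p i -> nonneg_antitone_supermodular (F i)) ->
  nonneg_antitone_supermodular (fun A => \prod_(i <- r | p i) F i A).
Proof.
move=> FP; elim: r => [|j r IHr].
  apply: (eq_nonneg_antitone_supermodular
    (nonneg_antitone_supermodular_cst (@ler01 R))).
  by move=> A; rewrite big_nil.
case pj: (p j).
- apply: (eq_nonneg_antitone_supermodular
    (nonneg_antitone_supermodularM (FP j pj) IHr)).
  by move=> A; rewrite big_cons pj.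
- apply: (eq_nonneg_antitone_supermodular IHr).
  by move=> A; rewrite big_cons pj.
Qed.

Lemma mem_le_antitone (f : bool -> R) (e : T) A B :
  f true <= f false -> A \subset B -> f (e \in B) <= f (e \in A).
Proof.
move=> f_le /subsetP AB; case eA: (e \in A); first by rewrite AB.
by case: (e \in B).
Qed.

Lemma nonneg_antitone_supermodular_mem (e0 : T) (f : bool -> R) :
  0 <= f true <= f false -> nonneg_antitone_supermodular (fun A => f (e0 \in A)).
Proof.
move=> /andP[f0 f_le].
have antitone A B : A \subset B -> f (e0 \in B) <= f (e0 \in A).
  exact: mem_le_antitone.
split=> // [A|]; first by case: (e0 \in A); last exact: le_trans f_le.
apply: supermodular_notin => // A B e AB eB.
have eA : e \notin A by apply: contra eB; apply: subsetP.
rewrite !in_setU1; have [->|_] := eqVneq e0 e; last by rewrite !subrr.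
by rewrite (negbTE eA) (negbTE eB).
Qed.

Lemma min_sub_min_le (a b x y : R) :
  a <= b -> y <= x ->
  Order.min a x - Order.min b x <= Order.min a y - Order.min b y.
Proof.
by move=> ab yx; case: (lerP a x); case: (lerP b x); case: (lerP a y);
  case: (lerP b y); lra.
Qed.

Lemma nonneg_antitone_supermodular_bigmin (S : {set T}) (l : R)
    (f : T -> bool -> R) :
  0 <= l -> (forall e, e \in S -> 0 <= f e true <= f e false) ->
  nonneg_antitone_supermodular
    (fun A => \big[Order.min/l]_(e in S) f e (e \in A)).
Proof.
move=> l0 fS; set Phi := fun A => _.
have antitone A B : A \subset B -> Phi B <= Phi A.
  by move=> AB; apply: le_bigmin2 => e /fS /andP[_ f_le]; exact: mem_le_antitone.
split=> // [A|].
  apply: le_bigmin => // e /fS /andP[f0 f_le].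
  by case: (e \in A); last exact: le_trans f_le.
apply: supermodular_notin => // A B e0 AB e0B.
have e0A : e0 \notin A by apply: contra e0B; apply: subsetP.
have [e0S|e0S] := boolP (e0 \in S); last first.
  have Phi_e0 X : Phi (e0 |: X) = Phi X.
    apply: eq_bigr => e eS; rewrite in_setU1.
    by have [eq_e0|] := eqVneq e e0; first by rewrite -eq_e0 eS in e0S.
  by rewrite !Phi_e0 !subrr.
pose m X := \big[Order.min/l]_(e | (e \in S) && (e != e0)) f e (e \in X).
have Phi_split X : e0 \notin X ->
    Phi X = Order.min (f e0 false) (m X) /\
    Phi (e0 |: X) = Order.min (f e0 true) (m X).
  move=> e0X; split; rewrite /Phi (bigminD1 _ _ _ e0S) ?setU11 ?(negbTE e0X) //.
  congr Order.min; apply: eq_bigr => e /andP[_ ne0].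
  by rewrite in_setU1 (negbTE ne0).
have [-> ->] := Phi_split B e0B; have [-> ->] := Phi_split A e0A.
apply: min_sub_min_le; first by case/andP: (fS e0 e0S).
by apply: le_bigmin2 => e /andP[/fS /andP[_ f_le] _]; exact: mem_le_antitone.
Qed.

End SetFunctions.

Section ReducedValues.
Variables (V : finType) (R : realFieldType) (E : {set V * V}).
Variables (C : V * V -> R) (gamma : R) (k : nat) (P : 'I_k -> {set V * V}).
Variable lam : 'I_k -> R.
Hypothesis gamma_ge0 : 0 <= gamma.
Hypothesis gamma_le_C : forall e, e \in E -> gamma <= C e.
Hypothesis lam_ge0 : forall i, 0 <= lam i.

(* At [L = 0] the ratio is [0 / 0 = 0], which keeps it monotone in [x]. *)
Definition capped_ratio (L x : R) : R := if x <= L then x / L else 1.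

Lemma capped_ratio_ge0 (L x : R) : 0 <= L -> 0 <= x -> 0 <= capped_ratio L x.
Proof. by move=> L0 x0; rewrite /capped_ratio; case: ifP; rewrite ?divr_ge0. Qed.

Lemma capped_ratio_le (L x y : R) :
  0 <= L -> x <= y -> capped_ratio L x <= capped_ratio L y.
Proof.
move=> L0 xy; rewrite /capped_ratio.
case: ifP => xL; case: ifP => yL; last by [].
- by rewrite ler_wpM2r ?invr_ge0.
- have [->|L_neq0] := eqVneq L 0; first by rewrite invr0 mulr0.
  by rewrite ler_pdivrMr ?mul1r // lt_def L_neq0 L0.
- by rewrite (le_trans xy yL) in xL.
Qed.

Lemma load_ge0 (e : V * V) : 0 <= load P lam e.
Proof. exact: sumr_ge0. Qed.

Let reduced (e : V * V) (b : bool) : R := C e - gamma * b%:R.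

Lemma reduced_bounds (e : V * V) :
  e \in E -> 0 <= reduced e true <= reduced e false.
Proof.
by move=> /gamma_le_C gC; rewrite /reduced mulr1 mulr0 subr0 subr_ge0 gC gerBl.
Qed.

Lemma lam1_nonneg_antitone_supermodular (i : 'I_k) :
  nonneg_antitone_supermodular (lam1 P E C gamma lam i).
Proof.
apply: (@nonneg_antitone_supermodular_bigmin _ _ _ _ reduced) => // e.
by rewrite !inE => /and3P[_ eE _]; exact: reduced_bounds.
Qed.

Lemma lam2_nonneg_antitone_supermodular (i : 'I_k) :
  nonneg_antitone_supermodular (lam2 P E C gamma lam i).
Proof.
have shared_factor e : e \in P i :&: E2 P E -> nonneg_antitone_supermodular
    (fun A => capped_ratio (load P lam e) (reduced e (e \in A))).
  rewrite !inE => /and3P[_ eE _]; have /andP[r0 r_le] := reduced_bounds eE.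
  apply: (@nonneg_antitone_supermodular_mem _ _ e
    (fun b => capped_ratio (load P lam e) (reduced e b))).
  by rewrite capped_ratio_ge0 ?capped_ratio_le ?load_ge0.
apply: (eq_nonneg_antitone_supermodular (nonneg_antitone_supermodularM
  (lam1_nonneg_antitone_supermodular i)
  (nonneg_antitone_supermodular_prod (index_enum _) shared_factor))).
by move=> A; rewrite /lam2 big_mkcondr.
Qed.

End ReducedValues.

Theorem lemma2 (V : finType) (E : {set V * V}) (R : realFieldType)
  (C : V * V -> R) (gamma : R) (k : nat) (P : 'I_k -> {set V * V})
  (lam : 'I_k -> R) :
  simple_digraph E ->
  acyclic E ->
  (forall e, e \in E -> 0 <= C e) ->
  0 < gamma ->
  (forall e, e \in E -> gamma <= C e) ->
  (forall i, is_dpath E (P i)) ->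
  (forall i, 0 <= lam i) ->
  (forall e, e \in E -> load P lam e <= C e) ->
  (forall A B : {set V * V}, A \subset B -> B \subset E ->
     LambdaBar P E C gamma lam A <= LambdaBar P E C gamma lam B) /\
  (forall (A B : {set V * V}) (e : V * V), A \subset B -> B \subset E -> e \in E ->
     LambdaBar P E C gamma lam (e |: B) - LambdaBar P E C gamma lam B
     <= LambdaBar P E C gamma lam (e |: A) - LambdaBar P E C gamma lam A).
Proof.
move=> _ _ _ /ltW gamma_ge0 gamma_le_C _ lam_ge0 _.
have lam2P i : nonneg_antitone_supermodular (lam2 P E C gamma lam i).
  exact: lam2_nonneg_antitone_supermodular.
have [_ sum_antitone sum_supermodular] := nonneg_antitone_supermodular_sum
  (index_enum _) (p := fun=> true) (fun i _ => lam2P i).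
rewrite /LambdaBar; split=> [A B AB _ | A B e AB _ _].
- by have := sum_antitone A B AB; lra.
- by have := sum_supermodular A B e AB; lra.
Qed.
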